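(* Let $N\in\mathbb{C}^{m\times n}$ have rank $r$ and singular value decomposition $N=U\begin{pmatrix}\Sigma & 0\\ 0 & 0\end{pmatrix}V^{\ast}$, where $\Sigma\in\mathbb{C}^{r\times r}$ is diagonal with positive diagonal entries and $U\in\mathbb{C}^{m\times m}$, $V\in\mathbb{C}^{n\times n}$ are unitary. Let $X\in\mathbb{C}^{m\times m}$ and $Y\in\mathbb{C}^{n\times n}$ be nonsingular and let $M=XNY$. Assume that $X=U\begin{pmatrix}X_{1} & 0\\ X_{2} & X_{4}\end{pmatrix}U^{\ast}$ for some blocks $X_{1}\in\mathbb{C}^{r\times r}$, $X_{2}\in\mathbb{C}^{(m-r)\times r}$, $X_{4}\in\mathbb{C}^{(m-r)\times(m-r)}$, and $Y=V\begin{pmatrix}Y_{1} & Y_{3}\\ 0 & Y_{4}\end{pmatrix}V^{\ast}$ for some blocks $Y_{1}\in\mathbb{C}^{r\times r}$, $Y_{3}\in\mathbb{C}^{r\times(n-r)}$, $Y_{4}\in\mathbb{C}^{(n-r)\times(n-r)}$. If both $XE_{N}$ and $F_{N}Y$ are Hermitian, then $$M^{\dagger}=(I+L^{\ast})(I+LL^{\ast})^{-1}Y^{-1}N^{\dagger}X^{-1}(I+R^{\ast}R)^{-1}(I+R^{\ast}),$$ where $R=XE_{N}X^{-1}(E_{N}-I)$ and $L=(F_{N}-I)Y^{-1}F_{N}Y$.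
   Context: For a complex matrix $A$, $A^{\ast}$ is its conjugate transpose and $A^{\dagger}$ its Moore--Penrose inverse. $E_{A}:=I-AA^{\dagger}$ and $F_{A}:=I-A^{\dagger}A$. $I$ denotes an identity matrix of the appropriate size. *)

From HB Require Import structures.
From mathcomp Require Import all_boot all_order all_algebra.
From Stdlib Require Import ClassicalEpsilon.
Set Implicit Arguments. Unset Strict Implicit. Unset Printing Implicit Defensive.
Import GRing.Theory Num.Theory.
Local Open Scope ring_scope.

Definition ctmx (C : numClosedFieldType) (m n : nat) (A : 'M[C]_(m, n))
  : 'M[C]_(n, m) := (map_mx Num.conj A)^T.

Definition is_mp_inverse (C : numClosedFieldType) (m n : nat)
  (A : 'M[C]_(m, n)) (X : 'M[C]_(n, m)) : Prop :=
  [/\ A *m X *m A = A, X *m A *m X = X,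
      ctmx (A *m X) = A *m X & ctmx (X *m A) = X *m A].

(* The Moore--Penrose inverse A^dagger: the (unique, always existing)
   matrix satisfying the Penrose equations. *)
Definition pinv (C : numClosedFieldType) (m n : nat) (A : 'M[C]_(m, n))
  : 'M[C]_(n, m) :=
  epsilon (inhabits 0) (fun X => is_mp_inverse A X).

Definition EA (C : numClosedFieldType) (m n : nat) (A : 'M[C]_(m, n))
  : 'M[C]_m := 1%:M - A *m pinv A.
Definition FA (C : numClosedFieldType) (m n : nat) (A : 'M[C]_(m, n))
  : 'M[C]_n := 1%:M - pinv A *m A.

Definition unitary_mx (C : numClosedFieldType) (n : nat) (U : 'M[C]_n) : Prop :=
  U *m ctmx U = 1%:M /\ ctmx U *m U = 1%:M.

Definition hermitian_mx (C : numClosedFieldType) (n : nat) (A : 'M[C]_n) : Prop :=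
  ctmx A = A.

From HB Require Import structures.
From mathcomp Require Import all_boot all_order all_algebra.
From Stdlib Require Import ClassicalEpsilon.
Import GRing.Theory Num.Theory.
Local Open Scope ring_scope.
Set Implicit Arguments. Unset Strict Implicit. Unset Printing Implicit Defensive.

(* The map A |-> P A Q^H with P, Q unitary carries Moore-Penrose inverses to
   Moore-Penrose inverses and commutes with E_N, F_N, inverses and conjugate
   transposes, hence with R, L and the whole right-hand side; so we may take
   U = V = I.  Then N = diag(D, 0), R = [0 0; K 0] and L = [0 J; 0 0] with
   K = X2 X1^-1 and J = Y1^-1 Y3, and M = [I; K] (X1 D Y1) [I J] is a full-rank
   factorization.  The right-hand side collapses to
   [I J]^H (I + J J^H)^-1 (X1 D Y1)^-1 (I + K^H K)^-1 [I; K]^H,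
   which is the Moore-Penrose inverse of that factorization. *)

Lemma mulmx1_invmx (R : comUnitRingType) n (A B : 'M[R]_n) :
  A *m B = 1%:M -> invmx A = B.
Proof.
by move=> AB; have [Au _] := mulmx1_unit AB; rewrite -[invmx A]mulmx1 -AB mulKmx.
Qed.

Lemma invmxM (R : comUnitRingType) n (A B : 'M[R]_n) :
  A \in unitmx -> B \in unitmx -> invmx (A *m B) = invmx B *m invmx A.
Proof. by move=> Au Bu; apply: mulmx1_invmx; rewrite mulmxA mulmxK // mulmxV. Qed.

Section BlockTriangular.
Variables (R : comUnitRingType) (n1 n2 : nat).

Lemma unitmx_lblock (A : 'M[R]_n1) (B : 'M[R]_(n2, n1)) (D : 'M[R]_n2) :
  (block_mx A 0 B D \in unitmx) = (A \in unitmx) && (D \in unitmx).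
Proof. by rewrite !unitmxE det_lblock unitrM. Qed.

Lemma unitmx_ublock (A : 'M[R]_n1) (B : 'M[R]_(n1, n2)) (D : 'M[R]_n2) :
  (block_mx A B 0 D \in unitmx) = (A \in unitmx) && (D \in unitmx).
Proof. by rewrite !unitmxE det_ublock unitrM. Qed.

Lemma invmx_lblock (A : 'M[R]_n1) (B : 'M[R]_(n2, n1)) (D : 'M[R]_n2) :
  A \in unitmx -> D \in unitmx ->
  invmx (block_mx A 0 B D) =
    block_mx (invmx A) 0 (- (invmx D *m B *m invmx A)) (invmx D).
Proof.
move=> Au Du; apply: mulmx1_invmx; rewrite mulmx_block.
rewrite !(mulmx0, mul0mx, addr0, add0r) mulmxN !mulmxA !mulmxV // mul1mx subrr.
by rewrite -scalar_mx_block.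
Qed.

Lemma invmx_ublock (A : 'M[R]_n1) (B : 'M[R]_(n1, n2)) (D : 'M[R]_n2) :
  A \in unitmx -> D \in unitmx ->
  invmx (block_mx A B 0 D) =
    block_mx (invmx A) (- (invmx A *m B *m invmx D)) 0 (invmx D).
Proof.
move=> Au Du; apply: mulmx1_invmx; rewrite mulmx_block.
rewrite !(mulmx0, mul0mx, addr0, add0r) mulmxN !mulmxA !mulmxV // mul1mx addNr.
by rewrite -scalar_mx_block.
Qed.

End BlockTriangular.

Section ConjugateTranspose.
Variable C : numClosedFieldType.

Lemma ctmx_mul m n k (A : 'M[C]_(m, n)) (B : 'M[C]_(n, k)) :
  ctmx (A *m B) = ctmx B *m ctmx A.
Proof. by rewrite /ctmx map_mxM trmx_mul. Qed.

Lemma ctmxK m n (A : 'M[C]_(m, n)) : ctmx (ctmx A) = A.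
Proof. by apply/matrixP=> i j; rewrite /ctmx !mxE conjCK. Qed.

Lemma ctmx1 n : ctmx (1%:M : 'M[C]_n) = 1%:M.
Proof. by rewrite /ctmx map_mx1 trmx1. Qed.

Lemma ctmx0 m n : ctmx (0 : 'M[C]_(m, n)) = 0.
Proof. by rewrite /ctmx map_mx0 trmx0. Qed.

Lemma ctmx_block m1 m2 n1 n2 (A : 'M[C]_(m1, n1)) (B : 'M[C]_(m1, n2))
    (D : 'M[C]_(m2, n1)) (E : 'M[C]_(m2, n2)) :
  ctmx (block_mx A B D E) = block_mx (ctmx A) (ctmx D) (ctmx B) (ctmx E).
Proof. by rewrite /ctmx map_block_mx tr_block_mx. Qed.

Lemma ctmx_row m n1 n2 (A : 'M[C]_(m, n1)) (B : 'M[C]_(m, n2)) :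
  ctmx (row_mx A B) = col_mx (ctmx A) (ctmx B).
Proof. by rewrite /ctmx map_row_mx tr_row_mx. Qed.

Lemma ctmx_col m1 m2 n (A : 'M[C]_(m1, n)) (B : 'M[C]_(m2, n)) :
  ctmx (col_mx A B) = row_mx (ctmx A) (ctmx B).
Proof. by rewrite /ctmx map_col_mx tr_col_mx. Qed.

Lemma unitmx_ctmx n (A : 'M[C]_n) : (ctmx A \in unitmx) = (A \in unitmx).
Proof. by rewrite /ctmx unitmx_tr map_unitmx. Qed.

Lemma ctmxV n (A : 'M[C]_n) : ctmx (invmx A) = invmx (ctmx A).
Proof.
have [Au | Aun] := boolP (A \in unitmx).
  by apply/esym/mulmx1_invmx; rewrite -ctmx_mul mulVmx // ctmx1.
by rewrite !invmx_out // inE unitmx_ctmx.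
Qed.

Lemma unitmx_1Dgram m n (A : 'M[C]_(m, n)) : 1%:M + ctmx A *m A \in unitmx.
Proof.
rewrite -row_free_unit; apply/inj_row_free => v; rewrite mulmxDr mulmx1 => v0.
have dotmx_ctmx k (u : 'rV[C]_k) : dotmx u u = (u *m ctmx u) 0 0.
  by rewrite dotmxE /ctmx map_trmx.
have : v *m ctmx v + v *m ctmx A *m ctmx (v *m ctmx A) = 0.
  by rewrite ctmx_mul ctmxK !mulmxA -mulmxDl -(mulmxA v) v0 mul0mx.
move/(congr1 (fun B : 'M[C]_1 => B 0 0)); rewrite [LHS]mxE [RHS]mxE -!dotmx_ctmx.
by move/eqP; rewrite paddr_eq0 ?dnorm_ge0 // dnorm_eq0 => /andP[/eqP].
Qed.

End ConjugateTranspose.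

Section MoorePenrose.
Variable C : numClosedFieldType.

Lemma mp_inverse_unique m n (A : 'M[C]_(m, n)) (Z1 Z2 : 'M[C]_(n, m)) :
  is_mp_inverse A Z1 -> is_mp_inverse A Z2 -> Z1 = Z2.
Proof.
case=> AZA1 ZAZ1 AZh1 ZAh1 [AZA2 ZAZ2 AZh2 ZAh2].
have Z1E : Z1 = Z1 *m A *m Z2.
  have {1}-> : Z1 = Z1 *m ctmx Z1 *m ctmx A.
    by rewrite -mulmxA -ctmx_mul AZh1 mulmxA ZAZ1.
  have -> : ctmx A = ctmx A *m (A *m Z2) by rewrite -AZh2 -ctmx_mul AZA2.
  by rewrite !mulmxA -(mulmxA Z1) -ctmx_mul AZh1 mulmxA ZAZ1.
have Z2E : Z2 = Z1 *m A *m Z2.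
  have {1}-> : Z2 = ctmx A *m ctmx Z2 *m Z2 by rewrite -ctmx_mul ZAh2 ZAZ2.
  have -> : ctmx A = Z1 *m A *m ctmx A by rewrite -ZAh1 -ctmx_mul mulmxA AZA1.
  rewrite -(mulmxA (Z1 *m A)) -ctmx_mul ZAh2.
  by rewrite -!mulmxA (mulmxA Z2) ZAZ2.
exact: etrans Z1E (esym Z2E).
Qed.

Lemma pinv_unique m n (A : 'M[C]_(m, n)) (Z : 'M[C]_(n, m)) :
  is_mp_inverse A Z -> pinv A = Z.
Proof.
move=> AZ; apply: (mp_inverse_unique _ AZ); rewrite /pinv.
by apply: epsilon_spec; exists Z.
Qed.

Lemma mp_inverse_mulmx m n k (B : 'M[C]_(m, k)) (B' : 'M[C]_(k, m))
    (D : 'M[C]_(k, n)) (D' : 'M[C]_(n, k)) :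
  B' *m B = 1%:M -> D *m D' = 1%:M ->
  ctmx (B *m B') = B *m B' -> ctmx (D' *m D) = D' *m D ->
  is_mp_inverse (B *m D) (D' *m B').
Proof.
move=> BB' DD' BB'h D'Dh.
have BDD'B' : B *m D *m (D' *m B') = B *m B' by rewrite !mulmxA -(mulmxA B) DD' mulmx1.
have D'B'BD : D' *m B' *m (B *m D) = D' *m D by rewrite !mulmxA -(mulmxA D') BB' mulmx1.
split; rewrite ?BDD'B' ?D'B'BD //.
- by rewrite mulmxA -(mulmxA B) BB' mulmx1.
- by rewrite -mulmxA (mulmxA D) DD' mul1mx.
Qed.

Lemma mp_inverse_full_rank m n k (B : 'M[C]_(m, k)) (W : 'M[C]_k) (D : 'M[C]_(k, n)) :
  ctmx B *m B \in unitmx -> W \in unitmx -> D *m ctmx D \in unitmx ->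
  is_mp_inverse (B *m W *m D)
    (ctmx D *m invmx (D *m ctmx D) *m invmx W *m invmx (ctmx B *m B) *m ctmx B).
Proof.
move=> Bu Wu Du.
pose G := invmx (ctmx B *m B); pose H := invmx (D *m ctmx D).
have -> : ctmx D *m H *m invmx W *m G *m ctmx B =
          (ctmx D *m H) *m (invmx W *m G *m ctmx B) by rewrite !mulmxA.
have hermG : ctmx G = G by rewrite ctmxV ctmx_mul ctmxK.
have hermH : ctmx H = H by rewrite ctmxV ctmx_mul ctmxK.
apply: mp_inverse_mulmx.
- by rewrite !mulmxA -(mulmxA _ _ B) -(mulmxA (invmx W)) mulVmx // mulmx1 mulVmx.
- by rewrite mulmxA mulmxV.
- by rewrite !mulmxA mulmxK // !ctmx_mul ctmxK hermG !mulmxA.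
- by rewrite !ctmx_mul ctmxK hermH !mulmxA.
Qed.

End MoorePenrose.

Section UnitaryEquivalence.
Variable C : numClosedFieldType.

Definition uequiv m n (P : 'M[C]_m) (Q : 'M[C]_n) (A : 'M[C]_(m, n)) : 'M[C]_(m, n) :=
  P *m A *m ctmx Q.

Lemma uequivM m n k (P : 'M[C]_m) (Q : 'M[C]_n) (S : 'M[C]_k) A B :
  unitary_mx Q -> uequiv P Q A *m uequiv Q S B = uequiv P S (A *m B).
Proof. by case=> _ QQ; rewrite /uequiv !mulmxA -(mulmxA _ (ctmx Q)) QQ mulmx1. Qed.

Lemma uequiv1 n (P : 'M[C]_n) : unitary_mx P -> uequiv P P 1%:M = 1%:M.
Proof. by case=> PP _; rewrite /uequiv mulmx1. Qed.

Lemma uequivD m n (P : 'M[C]_m) (Q : 'M[C]_n) A B :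
  uequiv P Q (A + B) = uequiv P Q A + uequiv P Q B.
Proof. by rewrite /uequiv mulmxDr mulmxDl. Qed.

Lemma uequivB m n (P : 'M[C]_m) (Q : 'M[C]_n) A B :
  uequiv P Q (A - B) = uequiv P Q A - uequiv P Q B.
Proof. by rewrite /uequiv mulmxBr mulmxBl. Qed.

Lemma uequiv1D n (P : 'M[C]_n) A :
  unitary_mx P -> 1%:M + uequiv P P A = uequiv P P (1%:M + A).
Proof. by move=> hP; rewrite uequivD uequiv1. Qed.

Lemma uequivB1 n (P : 'M[C]_n) A :
  unitary_mx P -> uequiv P P A - 1%:M = uequiv P P (A - 1%:M).
Proof. by move=> hP; rewrite uequivB uequiv1. Qed.

Lemma ctmx_uequiv m n (P : 'M[C]_m) (Q : 'M[C]_n) A :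
  ctmx (uequiv P Q A) = uequiv Q P (ctmx A).
Proof. by rewrite /uequiv !ctmx_mul ctmxK mulmxA. Qed.

Lemma invmx_uequiv n (P : 'M[C]_n) A :
  unitary_mx P -> invmx (uequiv P P A) = uequiv P P (invmx A).
Proof.
move=> hP; have [Pu Pctu] := mulmx1_unit hP.1.
have [Au | Aun] := boolP (A \in unitmx).
  by apply: mulmx1_invmx; rewrite uequivM // mulmxV // uequiv1.
by rewrite !invmx_out // inE !unitmx_mul Pu Pctu andbT.
Qed.

Lemma mp_inverse_uequiv m n (P : 'M[C]_m) (Q : 'M[C]_n) A Z :
  unitary_mx P -> unitary_mx Q -> is_mp_inverse A Z ->
  is_mp_inverse (uequiv P Q A) (uequiv Q P Z).
Proof.
move=> hP hQ [AZA ZAZ AZh ZAh].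
by split; rewrite !uequivM ?ctmx_uequiv ?AZA ?ZAZ ?AZh ?ZAh.
Qed.

Lemma pinv_uequiv m n (P : 'M[C]_m) (Q : 'M[C]_n) A Z :
  unitary_mx P -> unitary_mx Q -> is_mp_inverse A Z ->
  pinv (uequiv P Q A) = uequiv Q P (pinv A).
Proof.
move=> hP hQ AZ.
by rewrite (pinv_unique AZ); apply/pinv_unique/mp_inverse_uequiv.
Qed.

Lemma EA_uequiv m n (P : 'M[C]_m) (Q : 'M[C]_n) A Z :
  unitary_mx P -> unitary_mx Q -> is_mp_inverse A Z ->
  EA (uequiv P Q A) = uequiv P P (EA A).
Proof.
by move=> hP hQ AZ; rewrite /EA (pinv_uequiv hP hQ AZ) uequivM // uequivB uequiv1.
Qed.

Lemma FA_uequiv m n (P : 'M[C]_m) (Q : 'M[C]_n) A Z :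
  unitary_mx P -> unitary_mx Q -> is_mp_inverse A Z ->
  FA (uequiv P Q A) = uequiv Q Q (FA A).
Proof.
by move=> hP hQ AZ; rewrite /FA (pinv_uequiv hP hQ AZ) uequivM // uequivB uequiv1.
Qed.

End UnitaryEquivalence.

Section PinvFormula.
Variable C : numClosedFieldType.

Definition Rmx m n (X : 'M[C]_m) (N : 'M[C]_(m, n)) : 'M[C]_m :=
  X *m EA N *m invmx X *m (EA N - 1%:M).

Definition Lmx m n (N : 'M[C]_(m, n)) (Y : 'M[C]_n) : 'M[C]_n :=
  (FA N - 1%:M) *m invmx Y *m FA N *m Y.

Definition pinv_formula m n (X : 'M[C]_m) (N : 'M[C]_(m, n)) (Y : 'M[C]_n) :
    'M[C]_(n, m) :=
  let R := Rmx X N in let L := Lmx N Y in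
  (1%:M + ctmx L) *m invmx (1%:M + L *m ctmx L) *m invmx Y *m pinv N
    *m invmx X *m invmx (1%:M + ctmx R *m R) *m (1%:M + ctmx R).

Lemma pinv_formula_uequiv m n (P : 'M[C]_m) (Q : 'M[C]_n) X N Y Z :
  unitary_mx P -> unitary_mx Q -> is_mp_inverse N Z ->
  pinv_formula (uequiv P P X) (uequiv P Q N) (uequiv Q Q Y) =
    uequiv Q P (pinv_formula X N Y).
Proof.
move=> hP hQ NZ.
have eR : Rmx (uequiv P P X) (uequiv P Q N) = uequiv P P (Rmx X N).
  by rewrite /Rmx (EA_uequiv hP hQ NZ) invmx_uequiv // uequivB1 // !uequivM.
have eL : Lmx (uequiv P Q N) (uequiv Q Q Y) = uequiv Q Q (Lmx N Y).
  by rewrite /Lmx (FA_uequiv hP hQ NZ) invmx_uequiv // uequivB1 // !uequivM.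
rewrite /pinv_formula eR eL (pinv_uequiv hP hQ NZ) !ctmx_uequiv !uequivM //.
by rewrite !uequiv1D // !invmx_uequiv // !uequivM.
Qed.

End PinvFormula.

Section BlockForm.
Variables (C : numClosedFieldType) (r p q : nat) (D : 'M[C]_r).
Hypothesis D_unit : D \in unitmx.

Lemma mp_inverse_block_diag0 :
  is_mp_inverse (block_mx D 0 0 0 : 'M_(r + p, r + q)) (block_mx (invmx D) 0 0 0).
Proof.
split; rewrite !mulmx_block !(mulmx0, mul0mx, addr0) ?mulmxV ?mulVmx ?mul1mx //;
  by rewrite ctmx_block !ctmx0 ctmx1.
Qed.

Lemma EA_block_diag0 :
  EA (block_mx D 0 0 0 : 'M_(r + p, r + q)) = block_mx 0 0 0 1%:M.
Proof.
rewrite /EA (pinv_unique mp_inverse_block_diag0) mulmx_block.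
rewrite !(mulmx0, mul0mx, addr0) mulmxV // (scalar_mx_block r p) opp_block_mx.
by rewrite add_block_mx !(subrr, subr0).
Qed.

Lemma FA_block_diag0 :
  FA (block_mx D 0 0 0 : 'M_(r + p, r + q)) = block_mx 0 0 0 1%:M.
Proof.
rewrite /FA (pinv_unique mp_inverse_block_diag0) mulmx_block.
rewrite !(mulmx0, mul0mx, addr0) mulVmx // (scalar_mx_block r q) opp_block_mx.
by rewrite add_block_mx !(subrr, subr0).
Qed.

Lemma Rmx_lblock (X1 : 'M[C]_r) (X2 : 'M[C]_(p, r)) (X4 : 'M[C]_p) :
  X1 \in unitmx -> X4 \in unitmx ->
  Rmx (block_mx X1 0 X2 X4) (block_mx D 0 0 0 : 'M_(r + p, r + q)) =
    block_mx 0 0 (X2 *m invmx X1) 0.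
Proof.
move=> X1u X4u; rewrite /Rmx EA_block_diag0 invmx_lblock //.
rewrite (scalar_mx_block r p) opp_block_mx add_block_mx !mulmx_block.
rewrite !(mulmx0, mul0mx, mulmx1, addr0, add0r, subrr, sub0r, oppr0).
by rewrite !(mulmxN, mulNmx, opprK, mulmx1, mulmx0, addr0) !mulmxA mulmxV // mul1mx.
Qed.

Lemma Lmx_ublock (Y1 : 'M[C]_r) (Y3 : 'M[C]_(r, q)) (Y4 : 'M[C]_q) :
  Y1 \in unitmx -> Y4 \in unitmx ->
  Lmx (block_mx D 0 0 0 : 'M_(r + p, r + q)) (block_mx Y1 Y3 0 Y4) =
    block_mx 0 (invmx Y1 *m Y3) 0 0.
Proof.
move=> Y1u Y4u; rewrite /Lmx FA_block_diag0 invmx_ublock //.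
rewrite (scalar_mx_block r q) opp_block_mx add_block_mx !mulmx_block.
rewrite !(mulmx0, mul0mx, mulmx1, addr0, add0r, subrr, sub0r, oppr0).
by rewrite mulNmx mulmxN opprK mul1mx mulmxKV.
Qed.

Lemma Rmx_tail (K : 'M[C]_(p, r)) :
  let R : 'M_(r + p) := block_mx 0 0 K 0 in
  row_mx 1%:M 0 *m invmx (1%:M + ctmx R *m R) *m (1%:M + ctmx R) =
    invmx (1%:M + ctmx K *m K) *m ctmx (col_mx 1%:M K).
Proof.
rewrite /= ctmx_block !ctmx0 mulmx_block (scalar_mx_block r p) !add_block_mx.
rewrite !(mulmx0, mul0mx, addr0, add0r) invmx_block_diag; last first.
  by rewrite block_diag_mx_unit unitmx_1Dgram unitmx1.
rewrite invmx1 !mul_row_block !(mulmx0, mul0mx, mulmx1, mul1mx, addr0, add0r).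
by rewrite ctmx_col ctmx1 mul_mx_row mulmx1.
Qed.

Lemma Lmx_head (J : 'M[C]_(r, q)) :
  let L : 'M_(r + q) := block_mx 0 J 0 0 in
  (1%:M + ctmx L) *m invmx (1%:M + L *m ctmx L) *m col_mx 1%:M 0 =
    ctmx (row_mx 1%:M J) *m invmx (1%:M + J *m ctmx J).
Proof.
rewrite /= ctmx_block !ctmx0 mulmx_block (scalar_mx_block r q) !add_block_mx.
rewrite !(mulmx0, mul0mx, addr0, add0r) invmx_block_diag; last first.
  by rewrite block_diag_mx_unit -{1}(ctmxK J) unitmx_1Dgram unitmx1.
rewrite invmx1 mulmx_block mul_block_col.
rewrite !(mulmx0, mul0mx, mulmx1, mul1mx, addr0, add0r).
by rewrite ctmx_row ctmx1 mul_col_mx mul1mx.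
Qed.

Section Triangular.
Variables (X1 : 'M[C]_r) (X2 : 'M[C]_(p, r)) (X4 : 'M[C]_p).
Variables (Y1 : 'M[C]_r) (Y3 : 'M[C]_(r, q)) (Y4 : 'M[C]_q).
Hypotheses (X1_unit : X1 \in unitmx) (X4_unit : X4 \in unitmx).
Hypotheses (Y1_unit : Y1 \in unitmx) (Y4_unit : Y4 \in unitmx).

Lemma mul_lblock_diag0_ublock :
  block_mx X1 0 X2 X4 *m (block_mx D 0 0 0 : 'M_(r + p, r + q)) *m
      block_mx Y1 Y3 0 Y4 =
    col_mx 1%:M (X2 *m invmx X1) *m (X1 *m D *m Y1) *m row_mx 1%:M (invmx Y1 *m Y3).
Proof.
rewrite !mulmx_block !(mulmx0, mul0mx, addr0, add0r) mul_col_mx mul1mx mul_col_row.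
by rewrite !mulmxA !mulmxK // !mulmxKV // !mulmx1.
Qed.

Lemma mul_invmx_ublock_diag0_lblock :
  invmx (block_mx Y1 Y3 0 Y4) *m (block_mx (invmx D) 0 0 0 : 'M_(r + q, r + p)) *m
      invmx (block_mx X1 0 X2 X4) =
    col_mx 1%:M 0 *m invmx (X1 *m D *m Y1) *m row_mx 1%:M 0.
Proof.
rewrite invmx_ublock // invmx_lblock // !mulmx_block !(mulmx0, mul0mx, addr0, add0r).
rewrite mul_col_mx mul1mx mul0mx mul_col_row !(mulmx1, mulmx0, mul0mx).
by rewrite !invmxM ?unitmx_mul ?X1_unit ?D_unit // !mulmxA.
Qed.

Lemma mp_inverse_pinv_formula_triangular :
  let Xt := block_mx X1 0 X2 X4 in let Yt := block_mx Y1 Y3 0 Y4 in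
  let Nt : 'M_(r + p, r + q) := block_mx D 0 0 0 in
  is_mp_inverse (Xt *m Nt *m Yt) (pinv_formula Xt Nt Yt).
Proof.
move=> Xt Yt Nt; set K := X2 *m invmx X1; set J := invmx Y1 *m Y3.
set W := X1 *m D *m Y1.
have -> : pinv_formula Xt Nt Yt =
    (ctmx (row_mx 1%:M J) *m invmx (1%:M + J *m ctmx J)) *m invmx W *m
    (invmx (1%:M + ctmx K *m K) *m ctmx (col_mx 1%:M K)).
  rewrite /pinv_formula Rmx_lblock // Lmx_ublock // -Lmx_head -Rmx_tail.
  rewrite (pinv_unique mp_inverse_block_diag0) -(mulmxA _ (invmx Yt)).
  by rewrite -(mulmxA _ (invmx Yt *m _)) mul_invmx_ublock_diag0_lblock !mulmxA.
have gramK : ctmx (col_mx 1%:M K) *m col_mx 1%:M K = 1%:M + ctmx K *m K.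
  by rewrite ctmx_col mul_row_col ctmx1 mulmx1.
have gramJ : row_mx 1%:M J *m ctmx (row_mx 1%:M J) = 1%:M + J *m ctmx J.
  by rewrite ctmx_row mul_row_col ctmx1 mulmx1.
rewrite mul_lblock_diag0_ublock [X in is_mp_inverse _ X]mulmxA -gramK -gramJ.
apply: mp_inverse_full_rank; rewrite ?gramK ?gramJ ?unitmx_1Dgram //.
- by rewrite !unitmx_mul X1_unit D_unit.
- by rewrite -{1}(ctmxK J) unitmx_1Dgram.
Qed.

End Triangular.

End BlockForm.

Theorem corollary3p4 (C : numClosedFieldType) (r p q : nat)
  (N : 'M[C]_(r + p, r + q)) (U : 'M[C]_(r + p)) (V : 'M[C]_(r + q))
  (d : 'rV[C]_r)
  (X : 'M[C]_(r + p)) (Y : 'M[C]_(r + q))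
  (X1 : 'M[C]_r) (X2 : 'M[C]_(p, r)) (X4 : 'M[C]_p)
  (Y1 : 'M[C]_r) (Y3 : 'M[C]_(r, q)) (Y4 : 'M[C]_q) :
  \rank N = r ->
  (forall i, 0 < d 0 i) ->
  unitary_mx U -> unitary_mx V ->
  N = U *m block_mx (diag_mx d) 0 0 0 *m ctmx V ->
  X \in unitmx -> Y \in unitmx ->
  X = U *m block_mx X1 0 X2 X4 *m ctmx U ->
  Y = V *m block_mx Y1 Y3 0 Y4 *m ctmx V ->
  hermitian_mx (X *m EA N) -> hermitian_mx (FA N *m Y) ->
  let M := X *m N *m Y in
  let R := X *m EA N *m invmx X *m (EA N - 1%:M) in
  let L := (FA N - 1%:M) *m invmx Y *m FA N *m Y in
  pinv M =
    (1%:M + ctmx L) *m invmx (1%:M + L *m ctmx L) *m invmx Y *m pinv N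
      *m invmx X *m invmx (1%:M + ctmx R *m R) *m (1%:M + ctmx R).
Proof.
move=> _ d_gt0 hU hV hN Xu Yu hX hY _ _.
change (pinv (X *m N *m Y) = pinv_formula X N Y).
have D_unit : diag_mx d \in unitmx.
  rewrite unitmxE det_diag unitfE; apply/prodf_neq0 => i _.
  by rewrite lt0r_neq0.
have /andP[X1u X4u] : (X1 \in unitmx) && (X4 \in unitmx).
  by move: Xu; rewrite hX -(unitmx_lblock _ X2) !unitmx_mul => /andP[/andP[_ ->]].
have /andP[Y1u Y4u] : (Y1 \in unitmx) && (Y4 \in unitmx).
  by move: Yu; rewrite hY -(unitmx_ublock _ Y3) !unitmx_mul => /andP[/andP[_ ->]].
have block_case := mp_inverse_pinv_formula_triangular D_unit X2 Y3 X1u X4u Y1u Y4u.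
rewrite hN hX hY -!/(uequiv _ _ _) !uequivM //.
rewrite (pinv_formula_uequiv _ _ hU hV (mp_inverse_block_diag0 _ _ D_unit)).
by rewrite (pinv_uequiv hU hV block_case) (pinv_unique block_case).
Qed.
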